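(* Let $r\ge 1$ and $p_1,\dots,p_r\ge 1$, and let $(\mathbb{Z}_t)_{t\in\mathbb{Z}}$ be a tensor-valued time series with $\mathbb{Z}_t\in\mathbb{R}^{p_1\times\cdots\times p_r}$ (with finite fourth moments, so that all expectations below exist). Suppose the observed series is $$\mathbb{X}_t=\mathbb{Z}_t\odot_1\boldsymbol{\Omega}_1\odot_2\boldsymbol{\Omega}_2\cdots\odot_r\boldsymbol{\Omega}_r,\qquad t=0,\pm1,\pm2,\dots,$$ where each $\boldsymbol{\Omega}_m\in\mathbb{R}^{p_m\times p_m}$ is non-singular, and that for all $t$: $\mathrm{E}[\mathrm{vec}(\mathbb{Z}_t)]=\mathbf{0}$ and $\mathrm{Cov}[\mathrm{vec}(\mathbb{Z}_t)]=\mathbf{I}$. Let $\mathcal{T}$ be a fixed set of lags. Let $\mathbb{X}^{st}_t:=\mathbb{X}_t\odot_1(\boldsymbol{\Sigma}^1_0(\mathbb{X}_t))^{-1/2}\cdots\odot_r(\boldsymbol{\Sigma}^r_0(\mathbb{X}_t))^{-1/2}$ be the standardized series, and let $c>0$ and orthogonal matrices $\mathbf{U}_m\in\mathbb{R}^{p_m\times p_m}$, $m=1,\dots,r$, be such that $\mathbb{X}^{st}_t=c\,\mathbb{Z}_t\odot_1\mathbf{U}_1\cdots\odot_r\mathbf{U}_r$ for all $t$ (such $c$ and $\mathbf{U}_m$ exist under the stated assumptions). Assume additionally one of the following: (i) for all $m=1,\dots,r$ and $\tau\in\mathcal{T}$, the matrix $\boldsymbol{\Sigma}^m_\tau(\mathbb{Z}_t)$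 is diagonal; (ii) for all $m=1,\dots,r$ and $\tau\in\mathcal{T}$, the matrix $\mathbf{B}^m_\tau(\mathbb{Z}_t)$ is diagonal; (iii) for all $m=1,\dots,r$, $i,j=1,\dots,p_m$ and $\tau\in\mathcal{T}$, the matrix $\mathbf{C}^m_{\tau ij}(\mathbb{Z}_t)$ is diagonal. Then for each fixed mode $m=1,\dots,r$, the matrix $\mathbf{U}_m^T$ diagonalizes (i.e. $\mathbf{U}_m^T\mathbf{M}\mathbf{U}_m$ is diagonal), respectively: in case (i) the matrices $\boldsymbol{\Sigma}^m_\tau(\mathbb{X}^{st}_t)$, $\tau\in\mathcal{T}$; in case (ii) the matrices $\mathbf{B}^m_\tau(\mathbb{X}^{st}_t)$, $\tau\in\mathcal{T}$; in case (iii) the matrices $\mathbf{C}^m_{\tau ij}(\mathbb{X}^{st}_t)$, $\tau\in\mathcal{T}$, $i,j=1,\dots,p_m$.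
   Context: Tensor notation: for $\mathbb{X}\in\mathbb{R}^{p_1\times\cdots\times p_r}$, the $m$-mode vectors are obtained by fixing all indices except the $m$-th and letting the $m$-th vary; there are $\rho_m:=\prod_{i\ne m}p_i$ of them, each of length $p_m$. The $m$-flattening $\mathbf{X}^{(m)}\in\mathbb{R}^{p_m\times\rho_m}$ is the matrix obtained by stacking all $m$-mode vectors as columns in a fixed, consistent order. For $\mathbf{A}\in\mathbb{R}^{p_m\times p_m}$, $\mathbb{X}\odot_m\mathbf{A}$ is the tensor of the same size with entries $(\mathbb{X}\odot_m\mathbf{A})_{i_1\cdots i_r}=\sum_{j}x_{i_1\cdots i_{m-1}\,j\,i_{m+1}\cdots i_r}a_{i_m j}$, equivalently $(\mathbb{X}\odot_m\mathbf{A})^{(m)}=\mathbf{A}\mathbf{X}^{(m)}$; $\mathbb{X}\odot_1\mathbf{A}_1\cdots\odot_r\mathbf{A}_r$ means applying these successively. $\mathrm{vec}$ denotes vectorization. $\mathbf{e}_i$ is the $i$-th standard basis vector of $\mathbb{R}^{p_m}$, $\mathbf{E}^{ij}:=\mathbf{e}_i\mathbf{e}_j^T$, and $\mathbf{M}^{-1/2}$ denotes the unique symmetric positive definite inverse square root. For a tensor-valued series $\mathbb{X}_t$ with $m$-flattenings $\mathbf{X}^{(m)}_t$, define the $p_m\times p_m$ matrices $\boldsymbol{\Sigma}^m_\tau(\mathbb{X}_t):=\frac{1}{\rho_m}\mathrm{E}[\mathbf{X}^{(m)}_t(\mathbf{X}^{(m)}_{t+\tau})^T]$ (so $\boldsymbol{\Sigma}^m_0$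 is the $m$-mode covariance matrix), $\mathbf{B}^m_\tau(\mathbb{X}_t):=\frac{1}{\rho_m}\mathrm{E}[\mathbf{X}^{(m)}_t(\mathbf{X}^{(m)}_{t+\tau})^T\mathbf{X}^{(m)}_{t+\tau}(\mathbf{X}^{(m)}_t)^T]$, for lags $\tau_1,\tau_2,\tau_3,\tau_4$ and $i,j=1,\dots,p_m$: $\mathbf{B}^m_{\tau_1\tau_2\tau_3\tau_4 ij}(\mathbb{X}_t):=\frac{1}{\rho_m}\mathrm{E}\big[(\mathbf{e}_i^T\mathbf{X}^{(m)}_{t+\tau_1}(\mathbf{X}^{(m)}_{t+\tau_2})^T\mathbf{e}_j)\cdot\mathbf{X}^{(m)}_{t+\tau_3}(\mathbf{X}^{(m)}_{t+\tau_4})^T\big]$, and $\mathbf{C}^m_{\tau ij}(\mathbb{X}_t):=\mathbf{B}^m_{0\tau\tau0ij}(\mathbb{X}_t)+\mathbf{B}^m_{0\tau0\tau ij}(\mathbb{X}_t)-\mathbf{B}^m_{\tau\tau00ij}(\mathbb{X}_t)-\boldsymbol{\Sigma}^m_0(\mathbb{X}_t)(\mathbf{E}^{ij}+\mathbf{E}^{ji}+\mathbf{I})\boldsymbol{\Sigma}^m_0(\mathbb{X}_t)^T$. *)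

From HB Require Import structures.
From mathcomp Require Import all_boot all_order all_algebra.
From mathcomp Require Import all_classical all_reals all_analysis.
Set Implicit Arguments. Unset Strict Implicit. Unset Printing Implicit Defensive.
Import Order.TTheory GRing.Theory Num.Theory.
Local Open Scope ring_scope.

Definition midx (r : nat) (p : 'I_r -> nat) := {dffun forall k : 'I_r, 'I_(p k)}.
Definition tensor (R : Type) (r : nat) (p : 'I_r -> nat) := midx p -> R.

Definition rho (r : nat) (p : 'I_r -> nat) (m : 'I_r) : nat := (\prod_(k < r | k != m) p k)%N.

(* Column index set of the m-flattening: the multi-indices with the m-th
   coordinate fixed to 0, i.e. all choices of the other coordinates
   (there are rho_m of them); the fixed consistent order is enum order. *)
Definition colidx (r : nat) (p : 'I_r -> nat) (m : 'I_r) :=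
  {i : midx p | nat_of_ord (i m) == 0%N}.

Definition setidx (r : nat) (p : 'I_r -> nat) (i : midx p) (m : 'I_r) (a : 'I_(p m))
  : midx p := finfun (@dfwith _ (fun k => 'I_(p k)) (fun k => i k) m a).

Definition flat (R : Type) (r : nat) (p : 'I_r -> nat) (m : 'I_r) (X : tensor R p)
  : 'M[R]_(p m, #|{: colidx p m}|) :=
  \matrix_(a < p m, j < #|{: colidx p m}|) X (setidx (val (enum_val j)) a).

Definition tmul (R : pzRingType) (r : nat) (p : 'I_r -> nat) (m : 'I_r)
  (A : 'M[R]_(p m)) (X : tensor R p) : tensor R p :=
  fun i => \sum_(j < p m) X (setidx i j) * A (i m) j.

Definition tmul_all (R : pzRingType) (r : nat) (p : 'I_r -> nat)
  (A : forall m : 'I_r, 'M[R]_(p m)) (X : tensor R p) : tensor R p :=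
  foldl (fun Y m => tmul (A m) Y) X (enum 'I_r).

Definition orthogonal_mx (R : pzRingType) (n : nat) (U : 'M[R]_n) : Prop :=
  U *m U^T = 1%:M.

Definition posdef_mx (R : numDomainType) (n : nat) (S : 'M[R]_n) : Prop :=
  S^T = S /\ forall v : 'rV[R]_n, v != 0 -> 0 < (v *m S *m v^T) 0 0.

(* M^{-1/2}: the (unique, for M symmetric positive definite) symmetric
   positive definite S with S S M = I; 0 if no such S exists. *)
Definition invsqrtmx (R : realType) (n : nat) (M : 'M[R]_n) : 'M[R]_n :=
  xget 0 [set S : 'M[R]_n | posdef_mx S /\ S *m S *m M = 1%:M].

Section Moments.
Context {d : measure_display} {T : measurableType d} {R : realType}
  (P : probability T R).

Definition Emx (a b : nat) (F : T -> 'M[R]_(a, b)) : 'M[R]_(a, b) :=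
  \matrix_(i < a, j < b) fine ('E_P[fun w => F w i j])%E.

Context {r : nat} {p : 'I_r -> nat}.
Implicit Types (X : int -> T -> tensor R p) (m : 'I_r) (t tau : int).

Definition fprod X m t (s1 s2 : int) (w : T) : 'M[R]_(p m) :=
  flat m (X (t + s1) w) *m (flat m (X (t + s2) w))^T.

Definition Sigma m tau X t : 'M[R]_(p m) :=
  (rho p m)%:R^-1 *: Emx (fprod X m t 0 tau).

Definition Bmx m tau X t : 'M[R]_(p m) :=
  (rho p m)%:R^-1 *: Emx (fun w => fprod X m t 0 tau w *m fprod X m t tau 0 w).

Definition B4 m (t1 t2 t3 t4 : int) (i j : 'I_(p m)) X t : 'M[R]_(p m) :=
  (rho p m)%:R^-1 *: Emx (fun w => fprod X m t t1 t2 w i j *: fprod X m t t3 t4 w).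

Definition Cmx m tau (i j : 'I_(p m)) X t : 'M[R]_(p m) :=
  @B4 m 0 tau tau 0 i j X t + @B4 m 0 tau 0 tau i j X t - @B4 m tau tau 0 0 i j X t
  - Sigma m 0 X t *m (delta_mx i j + delta_mx j i + 1%:M) *m (Sigma m 0 X t)^T.

End Moments.

Arguments B4 {d T R} P {r p} m t1 t2 t3 t4 i j X t.
Arguments Cmx {d T R} P {r p} m tau i j X t.

From Pilot Require Import Defs.
From HB Require Import structures.
From mathcomp Require Import all_boot all_order all_algebra.
From mathcomp Require Import all_classical all_reals all_analysis.
From mathcomp Require Import ring lra.
Import Order.TTheory GRing.Theory Num.Theory.
Local Open Scope ring_scope.

(* In the product
   Y^(m) Y'^(m)T of two m-flattenings, an orthogonal factor acting on a mode
   k <> m cancels, so for Xst it equals c^2 U_m (Z^(m) Z'^(m)T) U_m^T.  Finite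
   fourth moments make every entry integrable, hence by linearity of expectation
   Sigma^m_tau(Xst) and B^m_tau(Xst) are the corresponding matrices of Z
   conjugated by U_m, while B^m_{..ij}(Xst) = c^4 U_m (sum_kl U_ik U_jl
   B^m_{..kl}(Z)) U_m^T.  As Cov(vec Z_t) = I, Sigma^m_0(Z) is scalar, and then
   U_m^T C^m_{tau ij}(Xst) U_m is a combination of the C^m_{tau kl}(Z) plus a
   multiple of the identity; all these operations preserve diagonality. *)

Section MultiIndex.
Context {r : nat} {p : 'I_r -> nat}.
Implicit Types (i : midx p) (m k : 'I_r).

Lemma setidx_at i m (a : 'I_(p m)) : setidx i a m = a.
Proof. by rewrite ffunE; apply: dfwith_in. Qed.

Lemma setidx_other i m (a : 'I_(p m)) k : k != m -> setidx i a k = i k.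
Proof. by move=> km; rewrite ffunE; apply: dfwith_out; rewrite eq_sym. Qed.

Lemma setidx_id i m : setidx i (i m) = i.
Proof.
by apply/ffunP => k; case: (eqVneq k m) => [->|km]; rewrite ?setidx_at ?setidx_other.
Qed.

Lemma setidx_setidx i m (a b : 'I_(p m)) : setidx (setidx i a) b = setidx i b.
Proof.
by apply/ffunP => k; case: (eqVneq k m) => [->|km]; rewrite ?setidx_at ?setidx_other.
Qed.

Lemma setidxC i m k (a : 'I_(p m)) (b : 'I_(p k)) : k != m ->
  setidx (setidx i a) b = setidx (setidx i b) a.
Proof.
move=> km; apply/ffunP => l.
case: (eqVneq l m) => [->|lm]; first by rewrite setidx_other 1?eq_sym // !setidx_at.
case: (eqVneq l k) => [->|lk]; first by rewrite setidx_at setidx_other // setidx_at.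
by rewrite !setidx_other.
Qed.

Lemma setidx_inj i m : injective (@setidx r p i m).
Proof. by move=> a b /(congr1 (fun j : midx p => j m)); rewrite !setidx_at. Qed.

Lemma big_setidx {V : nmodType} {k} (a0 : 'I_(p k)) (Q : pred (midx p))
    (g : midx p -> V) :
  (forall i (a : 'I_(p k)), Q (setidx i a) = Q i) ->
  \sum_(i | Q i) g i = \sum_(i | Q i && (i k == a0)) \sum_(a < p k) g (setidx i a).
Proof.
move=> Qk.
rewrite (partition_big (fun i => setidx i a0) (fun i => Q i && (i k == a0))); last first.
  by move=> i Qi; rewrite Qk Qi setidx_at eqxx.
apply: eq_bigr => i /andP[Qi /eqP ik].
rewrite (reindex_onto (@setidx r p i k) (fun j => j k)); last first.
  by move=> j /andP[Qj /eqP <-]; rewrite setidx_setidx setidx_id.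
apply: eq_bigl => a.
by rewrite Qk Qi setidx_setidx -ik setidx_id eqxx setidx_at eqxx.
Qed.

End MultiIndex.

Section Gram.
Context {R : comPzRingType} {r : nat} {p : 'I_r -> nat}.
Implicit Types (Y : tensor R p) (m k : 'I_r).

Definition gram m Y Y' : 'M[R]_(p m) := flat m Y *m (flat m Y')^T.

Lemma gramE m Y Y' a b : gram m Y Y' a b =
  \sum_(i : midx p | nat_of_ord (i m) == 0%N) Y (setidx i a) * Y' (setidx i b).
Proof.
rewrite mxE; under eq_bigr do rewrite !mxE.
rewrite -(big_enum_val (fun x : colidx p m => Y (setidx (val x) a) * Y' (setidx (val x) b))).
rewrite (reindex_omap (val : colidx p m -> midx p) insub); last by move=> i im; rewrite insubT.
by apply: eq_bigl => x; rewrite valK eqxx andbT (valP x).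
Qed.

Lemma flat_tmul m (A : 'M[R]_(p m)) Y : flat m (tmul A Y) = A *m flat m Y.
Proof.
apply/matrixP => a j; rewrite !mxE.
by apply: eq_bigr => l _; rewrite setidx_setidx setidx_at !mxE mulrC.
Qed.

Lemma gram_tmul m (A : 'M[R]_(p m)) Y Y' :
  gram m (tmul A Y) (tmul A Y') = A *m gram m Y Y' *m A^T.
Proof. by rewrite /gram !flat_tmul trmx_mul !mulmxA. Qed.

Lemma orthogonal_dot {n} (A : 'M[R]_n) (u v : 'I_n -> R) : A^T *m A = 1%:M ->
  \sum_s (\sum_j u j * A s j) * (\sum_l v l * A s l) = \sum_j u j * v j.
Proof.
move=> AtA.
transitivity (\sum_j \sum_l u j * v l * (A^T *m A) j l).
  under eq_bigr do rewrite mulr_suml.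
  under eq_bigr do under eq_bigr do rewrite mulr_sumr.
  rewrite exchange_big; apply: eq_bigr => j _.
  rewrite exchange_big; apply: eq_bigr => l _.
  rewrite mxE mulr_sumr; apply: eq_bigr => s _; rewrite mxE; ring.
apply: eq_bigr => j _; rewrite (bigD1 j) //= big1 => [|l lj].
  by rewrite AtA mxE eqxx mulr1 addr0.
by rewrite AtA mxE eq_sym (negbTE lj) mulr0.
Qed.

Lemma gramZ m c Y Y' :
  gram m (fun i => c * Y i) (fun i => c * Y' i) = c ^+ 2 *: gram m Y Y'.
Proof.
have flatZ Z : flat m (fun i => c * Z i) = c *: flat m Z by apply/matrixP => a j; rewrite !mxE.
by rewrite /gram !flatZ linearZ /= -scalemxAl -scalemxAr scalerA.
Qed.

Hypothesis hp : forall k, (0 < p k)%N.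

Lemma gram_tmul_other m k (A : 'M[R]_(p k)) Y Y' : k != m -> A^T *m A = 1%:M ->
  gram m (tmul A Y) (tmul A Y') = gram m Y Y'.
Proof.
move=> km AtA; apply/matrixP => a b; rewrite !gramE.
have Qk i (s : 'I_(p k)) : (nat_of_ord (setidx i s m) == 0%N) = (nat_of_ord (i m) == 0%N).
  by rewrite setidx_other // eq_sym.
rewrite (big_setidx (Ordinal (hp k)) _ _ Qk).
rewrite [RHS](big_setidx (Ordinal (hp k)) _ _ Qk).
apply: eq_bigr => i _.
have modek (j : midx p) (c : 'I_(p m)) : setidx j c k = j k by rewrite setidx_other.
rewrite -(orthogonal_dot A (fun l => Y (setidx (setidx i l) a))
                         (fun l => Y' (setidx (setidx i l) b)) AtA).
apply: eq_bigr => s _; rewrite /tmul !modek setidx_at.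
by congr (_ * _); apply: eq_bigr => l _; rewrite setidxC // setidx_setidx.
Qed.

Lemma gram_tmul_all (U : forall k, 'M[R]_(p k)) m Y Y' :
  (forall k, (U k)^T *m U k = 1%:M) ->
  gram m (tmul_all U Y) (tmul_all U Y') = U m *m gram m Y Y' *m (U m)^T.
Proof.
move=> UtU; rewrite /tmul_all.
suff gram_foldl s : uniq s -> forall Z Z' : tensor R p,
    gram m (foldl (fun Y k => tmul (U k) Y) Z s) (foldl (fun Y k => tmul (U k) Y) Z' s)
    = if m \in s then U m *m gram m Z Z' *m (U m)^T else gram m Z Z'.
  by rewrite gram_foldl ?enum_uniq // mem_enum.
elim: s => [|k s IH] //= /andP[ks us] Z Z'.
rewrite IH // in_cons; case: (eqVneq m k) => [->|mk] /=.
  by rewrite (negbTE ks) gram_tmul.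
by rewrite gram_tmul_other // eq_sym.
Qed.

End Gram.

Section Mixing.
Context {R : comPzRingType} {n : nat}.
Implicit Types (U A : 'M[R]_n) (M N : 'I_n -> 'I_n -> 'M[R]_n).

Definition mixmx U (i j : 'I_n) M : 'M[R]_n :=
  \sum_(kl : 'I_n * 'I_n) (U i kl.1 * U j kl.2) *: M kl.1 kl.2.

Lemma conj_mxE U A i j :
  (U *m A *m U^T) i j = \sum_(kl : 'I_n * 'I_n) U i kl.1 * U j kl.2 * A kl.1 kl.2.
Proof.
rewrite -(pair_bigA _ (fun k l => U i k * U j l * A k l)) mxE exchange_big /=.
apply: eq_bigr => l _.
by rewrite !mxE mulr_suml; apply: eq_bigr => k _; ring.
Qed.

Lemma conj_entry_scale U A B i j :
  (U *m A *m U^T) i j *: (U *m B *m U^T) = U *m mixmx U i j (fun k l => A k l *: B) *m U^T.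
Proof.
have -> : mixmx U i j (fun k l => A k l *: B) = (U *m A *m U^T) i j *: B.
  by rewrite conj_mxE scaler_suml; apply: eq_bigr => kl _; rewrite scalerA.
by rewrite -scalemxAr -scalemxAl.
Qed.

Lemma mixmxD U i j M N :
  mixmx U i j (fun k l => M k l + N k l) = mixmx U i j M + mixmx U i j N.
Proof. by rewrite -big_split; apply: eq_bigr => kl _; rewrite scalerDr. Qed.

Lemma mixmxZ U i j (x : R) M : mixmx U i j (fun k l => x *: M k l) = x *: mixmx U i j M.
Proof. by rewrite scaler_sumr; apply: eq_bigr => kl _; rewrite !scalerA mulrC. Qed.

Lemma mixmxN U i j M : mixmx U i j (fun k l => - M k l) = - mixmx U i j M.
Proof. by rewrite -sumrN; apply: eq_bigr => kl _; rewrite scalerN. Qed.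

Lemma mixmxC U i j M : mixmx U i j (fun k l => M l k) = mixmx U j i M.
Proof.
rewrite /mixmx -(pair_bigA _ (fun k l => (U i k * U j l) *: M l k)).
rewrite -(pair_bigA _ (fun k l => (U j k * U i l) *: M k l)) exchange_big /=.
by apply: eq_bigr => k _; apply: eq_bigr => l _; rewrite mulrC.
Qed.

Lemma mixmx_const U i j A :
  mixmx U i j (fun _ _ => A) = (\sum_(kl : 'I_n * 'I_n) U i kl.1 * U j kl.2) *: A.
Proof. by rewrite scaler_suml. Qed.

Lemma mixmx_delta U i j : mixmx U i j (fun k l => delta_mx k l) = U^T *m delta_mx i j *m U.
Proof.
rewrite [RHS]matrix_sum_delta pair_bigA; apply: eq_bigr => -[k l] _ /=.
congr (_ *: _); rewrite -(mul_delta_mx (0 : 'I_1)) mulmxA -colE -mulmxA -rowE.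
by rewrite mxE big_ord1 !mxE.
Qed.

Lemma conjZ_orthoK U A (x : R) :
  U^T *m U = 1%:M -> U^T *m (x *: (U *m A *m U^T)) *m U = x *: A.
Proof.
by move=> UtU; rewrite -scalemxAr -scalemxAl !mulmxA UtU mul1mx -mulmxA UtU mulmx1.
Qed.

Lemma conjZ_mul U A B (x y : R) : U^T *m U = 1%:M ->
  (x *: (U *m A *m U^T)) *m (y *: (U *m B *m U^T)) = (x * y) *: (U *m (A *m B) *m U^T).
Proof.
move=> UtU; rewrite -scalemxAl -scalemxAr scalerA !mulmxA.
by rewrite -[U *m A *m U^T *m U]mulmxA UtU mulmx1.
Qed.

Lemma is_diag_mxD A B : is_diag_mx A -> is_diag_mx B -> is_diag_mx (A + B).
Proof.
move=> /is_diag_mxP dA /is_diag_mxP dB; apply/is_diag_mxP => a b ab.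
by rewrite mxE dA // dB // addr0.
Qed.

Lemma is_diag_mxZ (x : R) A : is_diag_mx A -> is_diag_mx (x *: A).
Proof. by move=> /is_diag_mxP dA; apply/is_diag_mxP => a b ab; rewrite mxE dA // mulr0. Qed.

Lemma is_diag_mixmx U i j M : (forall k l, is_diag_mx (M k l)) -> is_diag_mx (mixmx U i j M).
Proof.
move=> dM; rewrite /mixmx; elim/big_ind: _ => [|A B|kl _]; [exact: mx0_is_diag|exact: is_diag_mxD|].
exact: is_diag_mxZ.
Qed.

(* The delta parts of the correction term in C mix exactly like the B4 terms;
   only its identity part leaves a multiple of 1. *)
Lemma conj_mixmx_correction U (x s : R) (C Da Db Dc : 'I_n -> 'I_n -> 'M[R]_n) i j :
  U^T *m U = 1%:M ->
  (forall k l, Da k l + Db k l - Dc k l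
               = C k l + s ^+ 2 *: (delta_mx k l + delta_mx l k + 1%:M)) ->
  U^T *m (x ^+ 4 *: (U *m mixmx U i j Da *m U^T) + x ^+ 4 *: (U *m mixmx U i j Db *m U^T)
          - x ^+ 4 *: (U *m mixmx U i j Dc *m U^T)
          - (x ^+ 2 * s)%:M *m (delta_mx i j + delta_mx j i + 1%:M) *m ((x ^+ 2 * s)%:M)^T) *m U
  = x ^+ 4 *: mixmx U i j C
    + (x ^+ 4 * s ^+ 2 * (\sum_(kl : 'I_n * 'I_n) U i kl.1 * U j kl.2 - 1)) *: 1%:M.
Proof.
move=> UtU DC.
rewrite -scalerDr -scalerBr -mulmxDl -mulmxBl -mulmxDr -mulmxBr.
have -> : mixmx U i j Da + mixmx U i j Db - mixmx U i j Dc
          = mixmx U i j (fun k l => C k l + s ^+ 2 *: (delta_mx k l + delta_mx l k + 1%:M)).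
  by rewrite -mixmxN -!mixmxD; apply: eq_bigr => kl _; rewrite DC.
rewrite mixmxD mixmxZ !mixmxD mixmx_const mixmx_delta.
rewrite (mixmxC U i j (fun k l => delta_mx k l)) mixmx_delta.
rewrite tr_scalar_mx mul_scalar_mx mul_mx_scalar mulmxBr mulmxBl conjZ_orthoK //.
rewrite -!scalemxAr -!scalemxAl !mulmxDr !mulmxDl mulmx1 UtU.
move: (mixmx U i j C) (U^T *m delta_mx i j *m U) (U^T *m delta_mx j i *m U) => M A B.
by apply/matrixP => a b; rewrite !mxE; ring.
Qed.

End Mixing.

Section RandomMatrix.
Context {d : measure_display} {T : measurableType d} {R : realType} (P : probability T R).

Definition integrable_mx {a b} (F : T -> 'M[R]_(a, b)) :=
  forall i j, (fun w => F w i j) \in Lfun P 1.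

Lemma Lfun1_le (f g : T -> R) : measurable_fun setT f -> (forall w, `|f w| <= g w) ->
  g \in Lfun P 1 -> f \in Lfun P 1.
Proof.
move=> mf fg /Lfun1_integrable ig; apply/Lfun1_integrable.
apply: le_integrable ig => //; first exact/measurable_realfun.measurable_EFinP.
by move=> w _ /=; rewrite lee_fin (le_trans (fg w)) // ler_norm.
Qed.

Lemma Lfun_sum {I : Type} (s : seq I) (Q : pred I) (g : I -> T -> R) :
  (forall x, g x \in Lfun P 1) -> (fun w => \sum_(x <- s | Q x) g x w) \in Lfun P 1.
Proof.
by move=> gL; rewrite -fct_sumE; elim/big_ind: _ => [|f h|x _]; [exact: rpred0|exact: rpredD|].
Qed.

Lemma Lfun_lincomb {I : Type} (s : seq I) (Q : pred I) (k : I -> R) (g : I -> T -> R) :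
  (forall x, g x \in Lfun P 1) -> (fun w => \sum_(x <- s | Q x) k x * g x w) \in Lfun P 1.
Proof. by move=> gL; apply: Lfun_sum => x; exact: (rpredZ (k x) (gL x)). Qed.

Lemma lincomb_fctE {I : Type} (s : seq I) (Q : pred I) (k : I -> R) (g : I -> T -> R) :
  (fun w => \sum_(x <- s | Q x) k x * g x w) = \sum_(x <- s | Q x) k x \o* g x.
Proof. by rewrite fct_sumE; apply/funext => w; apply: eq_bigr => x _; rewrite /= mulrC. Qed.

Lemma expectation_lincomb {I : Type} (s : seq I) (Q : pred I) (k : I -> R) (g : I -> T -> R) :
  (forall x, g x \in Lfun P 1) ->
  fine ('E_P[fun w => (\sum_(x <- s | Q x) k x * g x w)%R])%E
  = \sum_(x <- s | Q x) k x * fine ('E_P[g x])%E.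
Proof.
move=> gL; rewrite lincomb_fctE.
have finE f : f \in Lfun P 1 -> ('E_P[f] = (fine 'E_P[f])%:E)%E by move/expectation_fin_num/fineK.
have tailL s' : \sum_(y <- s' | Q y) k y \o* g y \in Lfun P 1 by rewrite -lincomb_fctE Lfun_lincomb.
elim: s => [|x s IH]; first by rewrite !big_nil (expectation_cst P 0).
rewrite !big_cons; case: (Q x) => //.
rewrite expectationD ?tailL ?Lfun_scale // expectationZl // finE // (finE _ (tailL s)).
by rewrite -EFinM -EFinD /= IH.
Qed.

Lemma Emx_linear {a b a' b'} (f : {linear 'M[R]_(a, b) -> 'M[R]_(a', b')})
    (F : T -> 'M[R]_(a, b)) :
  integrable_mx F -> Emx P (f \o F) = f (Emx P F).
Proof.
move=> iF.
have fE M i j : f M i j = \sum_(kl : 'I_a * 'I_b) f (delta_mx kl.1 kl.2) i j * M kl.1 kl.2.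
  rewrite {1}[M]matrix_sum_delta pair_bigA linear_sum summxE.
  by apply: eq_bigr => kl _; rewrite linearZ mxE mulrC.
apply/matrixP => i j; rewrite fE !mxE.
under eq_bigr do rewrite mxE.
rewrite -expectation_lincomb => [|kl]; last exact: iF.
by congr (fine 'E_P[_])%E; apply/funext => w; rewrite /= fE.
Qed.

Lemma Emx_conj {a b a' b'} (x : R) (A : 'M[R]_(a', a)) (B : 'M[R]_(b, b'))
    (F : T -> 'M[R]_(a, b)) :
  integrable_mx F -> Emx P (fun w => x *: (A *m F w *m B)) = x *: (A *m Emx P F *m B).
Proof. exact: (Emx_linear (( *:%R x) \o mulmxr B \o mulmx A)). Qed.

Lemma integrable_mx_lincomb {a b} {I : Type} (s : seq I) (Q : pred I) (k : I -> R)
    (F : I -> T -> 'M[R]_(a, b)) :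
  (forall x, integrable_mx (F x)) ->
  integrable_mx (fun w => \sum_(x <- s | Q x) k x *: F x w).
Proof.
move=> iF i j; rewrite (_ : (fun w => _) = fun w => \sum_(x <- s | Q x) k x * F x w i j).
  by apply: (Lfun_lincomb _ _ _ (fun x w => F x w i j)) => x; apply: iF.
by apply/funext => w; rewrite summxE; apply: eq_bigr => x _; rewrite mxE.
Qed.

Lemma Emx_lincomb {a b} {I : Type} (s : seq I) (Q : pred I) (k : I -> R)
    (F : I -> T -> 'M[R]_(a, b)) :
  (forall x, integrable_mx (F x)) ->
  Emx P (fun w => \sum_(x <- s | Q x) k x *: F x w) = \sum_(x <- s | Q x) k x *: Emx P (F x).
Proof.
move=> iF; apply/matrixP => i j; rewrite mxE summxE.
under [RHS]eq_bigr do rewrite !mxE.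
rewrite -expectation_lincomb => [|x]; last exact: iF.
by congr (fine 'E_P[_])%E; apply/funext => w; rewrite summxE; apply: eq_bigr => x _; rewrite mxE.
Qed.

Lemma integrable_mx_mixmx {n} (V : 'M[R]_n) i j (M : T -> 'I_n -> 'I_n -> 'M[R]_n) :
  (forall k l, integrable_mx (fun w => M w k l)) -> integrable_mx (fun w => mixmx V i j (M w)).
Proof. by move=> iM; apply: integrable_mx_lincomb => kl; exact: iM. Qed.

Lemma Emx_mixmx {n} (V : 'M[R]_n) i j (M : T -> 'I_n -> 'I_n -> 'M[R]_n) :
  (forall k l, integrable_mx (fun w => M w k l)) ->
  Emx P (fun w => mixmx V i j (M w)) = mixmx V i j (fun k l => Emx P (fun w => M w k l)).
Proof. by move=> iM; apply: Emx_lincomb => kl; exact: iM. Qed.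

End RandomMatrix.

Lemma norm_mul4_le (R : realDomainType) (a b c e : R) :
  `|a * b * c * e| <= a ^+ 4 + b ^+ 4 + c ^+ 4 + e ^+ 4.
Proof.
have n4 (x : R) : x ^+ 4 = `|x| ^+ 4 by rewrite -normrX ger0_norm ?exprn_even_ge0.
rewrite !normrM (n4 a) (n4 b) (n4 c) (n4 e).
have := normr_ge0 a; have := normr_ge0 b; have := normr_ge0 c; have := normr_ge0 e.
move: `|a| `|b| `|c| `|e| => A B C E A0 B0 C0 E0.
(* 4ABCE <= 2(A^2 B^2 + C^2 E^2) <= A^4 + B^4 + C^4 + E^4 *)
have := sqr_ge0 (A * B - C * E); have := sqr_ge0 (A ^+ 2 - B ^+ 2).
have := sqr_ge0 (C ^+ 2 - E ^+ 2); nra.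
Qed.

Section FourthMoments.
Context {d : measure_display} {T : measurableType d} {R : realType} (P : probability T R).

Definition finite_fourth_moment (f : T -> R) :=
  measurable_fun setT f /\ P.-integrable setT (fun w => (f w ^+ 4)%:E).

Lemma finite_fourth_moment_cst (c : R) : finite_fourth_moment (cst c).
Proof. by split; [exact: measurable_cst|exact: (finite_measure_integrable_cst P (c ^+ 4))]. Qed.

Lemma Lfun_mul4 f1 f2 f3 f4 :
  finite_fourth_moment f1 -> finite_fourth_moment f2 ->
  finite_fourth_moment f3 -> finite_fourth_moment f4 ->
  (fun w => f1 w * f2 w * f3 w * f4 w) \in Lfun P 1.
Proof.
move=> [m1 i1] [m2 i2] [m3 i3] [m4 i4].
apply: (Lfun1_le P _ ((fun w => f1 w ^+ 4) + (fun w => f2 w ^+ 4)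
                     + (fun w => f3 w ^+ 4) + (fun w => f4 w ^+ 4))).
- by repeat apply: measurable_realfun.measurable_funM.
- by move=> w; exact: norm_mul4_le.
- by repeat apply: rpredD; apply/Lfun1_integrable.
Qed.

End FourthMoments.

Section TensorSeries.
Context {d : measure_display} {T : measurableType d} {R : realType} (P : probability T R).
Context {r : nat} {p : 'I_r -> nat}.
Variable Z : int -> T -> tensor R p.
Hypothesis Z_moment4 : forall t i, finite_fourth_moment P (fun w => Z t w i).
Hypothesis Z_mean0 : forall t i, ('E_P[fun w => Z t w i] = 0)%E.
Hypothesis Z_cov : forall t i j,
  covariance P (fun w => Z t w i) (fun w => Z t w j) = (i == j)%:R%:E.

Lemma Lfun_Z2 t t' x y : (fun w => Z t w x * Z t' w y) \in Lfun P 1.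
Proof.
have one := finite_fourth_moment_cst P 1.
rewrite (_ : (fun w => _) = fun w => Z t w x * Z t' w y * cst 1 w * cst 1 w).
  exact: Lfun_mul4.
by apply/funext => w; rewrite /= !mulr1.
Qed.

Lemma Lfun_Z t x : (fun w => Z t w x) \in Lfun P 1.
Proof.
have one := finite_fourth_moment_cst P 1.
rewrite (_ : (fun w => _) = fun w => Z t w x * cst 1 w * cst 1 w * cst 1 w).
  exact: Lfun_mul4.
by apply/funext => w; rewrite /= !mulr1.
Qed.

Lemma integrable_fprod m t s1 s2 : integrable_mx P (Defs.fprod Z m t s1 s2).
Proof.
move=> a b; rewrite (_ : (fun w => _) = fun w => \sum_(i : midx p | nat_of_ord (i m) == 0%N)
    Z (t + s1) w (setidx i a) * Z (t + s2) w (setidx i b)).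
  by apply: Lfun_sum => i; exact: Lfun_Z2.
by apply/funext => w; exact: gramE.
Qed.

Lemma Lfun_fprodM m t s1 s2 s3 s4 a b a' b' :
  (fun w => Defs.fprod Z m t s1 s2 w a b * Defs.fprod Z m t s3 s4 w a' b') \in Lfun P 1.
Proof.
rewrite (_ : (fun w => _) = fun w =>
    \sum_(i : midx p | nat_of_ord (i m) == 0%N) \sum_(i' : midx p | nat_of_ord (i' m) == 0%N)
      Z (t + s1) w (setidx i a) * Z (t + s2) w (setidx i b) *
      Z (t + s3) w (setidx i' a') * Z (t + s4) w (setidx i' b')).
  by apply: Lfun_sum => i; apply: Lfun_sum => i'; exact: Lfun_mul4.
apply/funext => w.
rewrite -[LHS]/(gram m (Z (t + s1) w) (Z (t + s2) w) a b * gram m (Z (t + s3) w) (Z (t + s4) w) a' b').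
rewrite !gramE mulr_suml; apply: eq_bigr => i _.
by rewrite mulr_sumr; apply: eq_bigr => i' _; rewrite !mulrA.
Qed.

Lemma expectation_ZZ t x y : fine ('E_P[fun w => (Z t w x * Z t w y)%R])%E = (x == y)%:R.
Proof.
have := Z_cov t x y; rewrite covarianceE ?Lfun_Z ?Lfun_Z2 // !Z_mean0 mule0 sube0.
by move=> ->.
Qed.

(* The scalar is in fact 1, but only its existence is needed. *)
Lemma Sigma0_scalar m t : exists s : R, Sigma P m 0 Z t = s%:M.
Proof.
exists ((rho p m)%:R^-1 * #|[pred i : midx p | nat_of_ord (i m) == 0%N]|%:R).
apply/matrixP => a b; rewrite !mxE -mulrnAr; congr (_ * _).
rewrite (_ : (fun w => _) = fun w => \sum_(i : midx p | nat_of_ord (i m) == 0%N)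
    1 * (Z (t + 0) w (setidx i a) * Z (t + 0) w (setidx i b))).
  rewrite expectation_lincomb => [|i]; last exact: Lfun_Z2.
  under eq_bigr do rewrite mul1r expectation_ZZ (inj_eq (@setidx_inj _ _ _ m)).
  by case: (a == b); [rewrite sumr_const | rewrite big1].
by apply/funext => w; rewrite -[LHS]/(gram m _ _ a b) gramE; apply: eq_bigr => i _; rewrite mul1r.
Qed.

Hypothesis hp : forall m, (0 < p m)%N.
Variables (U : forall m : 'I_r, 'M[R]_(p m)) (c : R).
Hypothesis U_orth : forall m, (U m)^T *m U m = 1%:M.

Let Xs : int -> T -> tensor R p := fun t w i => c * tmul_all U (Z t w) i.

Lemma fprod_std m t s1 s2 w :
  Defs.fprod Xs m t s1 s2 w = c ^+ 2 *: (U m *m Defs.fprod Z m t s1 s2 w *m (U m)^T).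
Proof.
rewrite -[LHS]/(gram m (fun i => c * _) (fun i => c * _)) gramZ.
by rewrite (gram_tmul_all hp).
Qed.

Lemma Sigma_std m tau t : Sigma P m tau Xs t = c ^+ 2 *: (U m *m Sigma P m tau Z t *m (U m)^T).
Proof.
rewrite /Sigma (_ : Defs.fprod Xs m t 0 tau
                    = fun w => c ^+ 2 *: (U m *m Defs.fprod Z m t 0 tau w *m (U m)^T)).
  rewrite Emx_conj; last exact: integrable_fprod.
  by rewrite scalerA mulrC -scalerA -scalemxAr -scalemxAl.
by apply/funext => w; exact: fprod_std.
Qed.

Lemma Bmx_std m tau t : Bmx P m tau Xs t = c ^+ 4 *: (U m *m Bmx P m tau Z t *m (U m)^T).
Proof.
rewrite /Bmx (_ : (fun w => _) = fun w => c ^+ 4 *: (U m *m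
    (Defs.fprod Z m t 0 tau w *m Defs.fprod Z m t tau 0 w) *m (U m)^T)).
  rewrite Emx_conj; last first.
    move=> a b; rewrite (_ : (fun w => _) = fun w => \sum_l
        Defs.fprod Z m t 0 tau w a l * Defs.fprod Z m t tau 0 w l b).
      by apply: Lfun_sum => l; exact: Lfun_fprodM.
    by apply/funext => w; rewrite mxE.
  by rewrite scalerA mulrC -scalerA -scalemxAr -scalemxAl.
by apply/funext => w; rewrite !fprod_std conjZ_mul // -exprD.
Qed.

Lemma B4_std m s1 s2 s3 s4 i j t :
  B4 P m s1 s2 s3 s4 i j Xs t
  = c ^+ 4 *: (U m *m mixmx (U m) i j (fun k l => B4 P m s1 s2 s3 s4 k l Z t) *m (U m)^T).
Proof.
rewrite /B4 (_ : (fun w => _) = fun w => c ^+ 4 *: (U m *m mixmx (U m) i j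
    (fun k l => Defs.fprod Z m t s1 s2 w k l *: Defs.fprod Z m t s3 s4 w) *m (U m)^T)).
  have iM k l : integrable_mx P
      (fun w => Defs.fprod Z m t s1 s2 w k l *: Defs.fprod Z m t s3 s4 w).
    move=> a b; rewrite (_ : (fun w => _) = fun w =>
        Defs.fprod Z m t s1 s2 w k l * Defs.fprod Z m t s3 s4 w a b).
      exact: Lfun_fprodM.
    by apply/funext => w; rewrite mxE.
  rewrite Emx_conj; last exact: integrable_mx_mixmx.
  rewrite Emx_mixmx // mixmxZ.
  by rewrite scalerA mulrC -scalerA -scalemxAr -scalemxAl.
apply/funext => w; rewrite !fprod_std mxE -scalerA -conj_entry_scale.
by rewrite !scalerA; congr (_ *: _); ring.
Qed.

Lemma conj_Cmx_std m tau i j t : exists x : R,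
  (U m)^T *m Cmx P m tau i j Xs t *m U m
  = c ^+ 4 *: mixmx (U m) i j (fun k l => Cmx P m tau k l Z t) + x%:M.
Proof.
have [s Sig0] := Sigma0_scalar m t.
have UUt : U m *m (U m)^T = 1%:M by apply: mulmx1C; exact: U_orth.
have SigX0 : Sigma P m 0 Xs t = (c ^+ 2 * s)%:M.
  by rewrite Sigma_std Sig0 mul_mx_scalar -scalemxAl UUt !scale_scalar_mx mulr1.
eexists; rewrite /Cmx !B4_std SigX0.
rewrite (conj_mixmx_correction _ _ _ (fun k l => Cmx P m tau k l Z t) _ _ _ _ _ (U_orth m)).
  by rewrite scale_scalar_mx mulr1.
move=> k l; rewrite /Cmx Sig0 tr_scalar_mx mul_scalar_mx mul_mx_scalar scalerA -expr2.
by rewrite subrK.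
Qed.

End TensorSeries.

Theorem theorem2 (d : measure_display) (T : measurableType d) (R : realType)
  (P : probability T R) (r : nat) (p : 'I_r -> nat)
  (hr : (0 < r)%N) (hp : forall m : 'I_r, (0 < p m)%N)
  (Z : int -> T -> tensor R p)
  (Omega : forall m : 'I_r, 'M[R]_(p m))
  (lags : set int)
  (c : R) (U : forall m : 'I_r, 'M[R]_(p m)) :
  (* finite fourth moments *)
  (forall t i, measurable_fun setT (fun w => Z t w i)) ->
  (forall t i, P.-integrable setT (fun w => ((Z t w i) ^+ 4)%:E)) ->
  (* E[vec Z_t] = 0, Cov[vec Z_t] = I *)
  (forall t i, ('E_P[fun w => Z t w i] = 0)%E) ->
  (forall t i j, covariance P (fun w => Z t w i) (fun w => Z t w j) = (i == j)%:R%:E) ->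
  (* non-singular mixing matrices *)
  (forall m, Omega m \in unitmx) ->
  let X := fun t w => tmul_all Omega (Z t w) in
  let Xst := fun t w => tmul_all (fun m => invsqrtmx (Sigma P m 0 X t)) (X t w) in
  0 < c ->
  (forall m, orthogonal_mx (U m)) ->
  (forall t w, Xst t w = (fun i => c * tmul_all U (Z t w) i)) ->
  ((forall m tau t, lags tau -> is_diag_mx (Sigma P m tau Z t)) ->
     forall m tau t, lags tau -> is_diag_mx ((U m)^T *m Sigma P m tau Xst t *m U m))
  /\
  ((forall m tau t, lags tau -> is_diag_mx (Bmx P m tau Z t)) ->
     forall m tau t, lags tau -> is_diag_mx ((U m)^T *m Bmx P m tau Xst t *m U m))
  /\
  ((forall m tau (i j : 'I_(p m)) t, lags tau -> is_diag_mx (Cmx P m tau i j Z t)) ->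
     forall m tau (i j : 'I_(p m)) t, lags tau ->
       is_diag_mx ((U m)^T *m Cmx P m tau i j Xst t *m U m)).
Proof.
move=> Z_meas Z_fourth Z_mean0 Z_cov _ X Xst _ U_orth HXst.
have UtU m : (U m)^T *m U m = 1%:M by apply: mulmx1C; exact: U_orth.
have Z4 t i : finite_fourth_moment P (fun w => Z t w i) by split.
have -> : Xst = fun t w i => c * tmul_all U (Z t w) i.
  by apply/funext => t; apply/funext => w; exact: HXst.
split; [|split] => [dS m tau t lt|dB m tau t lt|dC m tau i j t lt].
- by rewrite (Sigma_std _ _ Z4 hp _ _ UtU) conjZ_orthoK // is_diag_mxZ // dS.
- by rewrite (Bmx_std _ _ Z4 hp _ _ UtU) conjZ_orthoK // is_diag_mxZ // dB.
- have [x ->] := conj_Cmx_std _ _ Z4 Z_mean0 Z_cov hp _ c UtU m tau i j t.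
  apply: is_diag_mxD; last exact: scalar_mx_is_diag.
  by apply/is_diag_mxZ/is_diag_mixmx => k l; exact: dC.
Qed.
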